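(* Let $\mathbf S=\langle S,+,0,\mathscr F\rangle$ be a semilattice with operators, and for $\theta\in\operatorname{Con}\mathbf S$ let $\eta(\theta)$ and $\tau(\theta)$ denote respectively the least and greatest congruences of $\mathbf S$ having the same $0$-class as $\theta$. If congruences $\zeta,\gamma,\chi\in\operatorname{Con}\mathbf S$ satisfy $\eta(\zeta)\le\eta(\gamma)$ and $\tau(\chi)\le\tau(\gamma)$, then \[ \eta\big(\eta(\zeta)\vee\tau(\zeta\wedge\chi)\big)\le\eta(\gamma). \]
   Context: A semilattice with operators is a join semilattice $(S,+)$ with least element $0$ together with a set $\mathscr F$ of unary maps preserving $+$ and $0$; congruences are equivalence relations compatible with $+$ and all $f\in\mathscr F$. If $I$ is the $0$-class of $\theta$, then $x\,\eta(\theta)\,y$ iff $x+i=y+i$ for some $i\in I$, and $x\,\tau(\theta)\,y$ iff for every $h$ in the monoid generated by $\mathscr F$ (including the identity), $h(x)\in I\Leftrightarrow h(y)\in I$. *)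

Set Implicit Arguments.

Record SLO := {
  carrier :> Type;
  sjoin : carrier -> carrier -> carrier;
  szero : carrier;
  sops : (carrier -> carrier) -> Prop;
  sjoinA : forall x y z, sjoin x (sjoin y z) = sjoin (sjoin x y) z;
  sjoinC : forall x y, sjoin x y = sjoin y x;
  sjoinI : forall x, sjoin x x = x;
  sjoin0 : forall x, sjoin szero x = x;
  sops_join : forall f, sops f -> forall x y, f (sjoin x y) = sjoin (f x) (f y);
  sops_zero : forall f, sops f -> f szero = szero
}.

Definition rel (T : Type) := T -> T -> Prop.

Definition is_con (S : SLO) (r : rel S) : Prop :=
  (forall x, r x x) /\
  (forall x y, r x y -> r y x) /\
  (forall x y z, r x y -> r y z -> r x z) /\
  (forall x y x' y', r x y -> r x' y' -> r (sjoin S x x') (sjoin S y y')) /\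
  (forall f, sops S f -> forall x y, r x y -> r (f x) (f y)).

Definition rle (T : Type) (r s : rel T) : Prop := forall x y, r x y -> s x y.

Definition con_meet (T : Type) (r s : rel T) : rel T := fun x y => r x y /\ s x y.

Definition con_join (S : SLO) (r s : rel S) : rel S :=
  fun x y => forall t : rel S, is_con S t -> rle r t -> rle s t -> t x y.

Inductive in_monoid (S : SLO) : (carrier S -> carrier S) -> Prop :=
  | mon_id : in_monoid S (fun x => x)
  | mon_comp : forall f h, sops S f -> in_monoid S h -> in_monoid S (fun x => f (h x)).

Definition zero_class (S : SLO) (theta : rel S) : S -> Prop :=
  fun i => theta i (szero S).

Definition eta (S : SLO) (theta : rel S) : rel S :=
  fun x y => exists i, zero_class S theta i /\ sjoin S x i = sjoin S y i.

Definition tau (S : SLO) (theta : rel S) : rel S :=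
  fun x y => forall h, in_monoid S h ->
    (zero_class S theta (h x) <-> zero_class S theta (h y)).

(* Since eta(theta) depends only on the 0-class of theta, it suffices to show
   that every i in the 0-class of eta(zeta) \/ tau(zeta /\ chi) lies in the
   0-class G of gamma.  That join is contained in the congruence
   "u ~ v iff u + a and v + a are tau(zeta /\ chi)-related for some a in the
   0-class Z of zeta", so tau(zeta /\ chi) relates i + a and a for some a in Z.
   Because every image h a stays in Z and h a <= h (i + a), this pair is even
   tau(chi)-related, hence tau(gamma)-related; as Z is contained in G, so is
   a, therefore i + a and finally i belong to G. *)
From Stdlib Require Import Setoid.

Section SemilatticeWithOperators.
Context {S : SLO}.
Local Notation "x + y" := (sjoin S x y).
Local Notation "0" := (szero S).

Lemma sjoinACA (u v u' v' : S) : (u + v) + (u' + v') = (u + u') + (v + v').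
Proof.
  rewrite !sjoinA; f_equal.
  rewrite <- !sjoinA; f_equal; apply sjoinC.
Qed.

Lemma in_monoid_join {h} : in_monoid S h -> forall x y, h (x + y) = h x + h y.
Proof.
  induction 1 as [|f h Hf _ IH]; intros x y; simpl; [reflexivity|].
  rewrite IH; apply sops_join; exact Hf.
Qed.

Lemma in_monoid_zero {h} : in_monoid S h -> h 0 = 0.
Proof.
  induction 1 as [|f h Hf _ IH]; simpl; [reflexivity|].
  rewrite IH; apply sops_zero; exact Hf.
Qed.

Lemma in_monoid_compr {h f} : in_monoid S h -> sops S f -> in_monoid S (fun x => h (f x)).
Proof.
  induction 1 as [|g h Hg _ IH]; intros Hf.
  - exact (@mon_comp S f (fun x => x) Hf (mon_id S)).
  - exact (@mon_comp S g _ Hg (IH Hf)).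
Qed.

Lemma con_in_monoid {r h} : is_con S r -> in_monoid S h ->
  forall x y, r x y -> r (h x) (h y).
Proof.
  intros (_ & _ & _ & _ & Hops).
  induction 1 as [|f h Hf _ IH]; intros x y Hxy; simpl; auto.
Qed.

Lemma zero_class_join {r} u v : is_con S r ->
  zero_class S r (u + v) <-> zero_class S r u /\ zero_class S r v.
Proof.
  intros (Rrefl & Rsym & Rtrans & Rjoin & _); unfold zero_class; split.
  - intros Huv.
    (* u = u + 0 r u + (u + v) = u + v, and symmetrically for v *)
    assert (Hu : r u (u + v)).
    { assert (E : r (u + 0) (u + (u + v))) by (apply Rjoin; auto; now apply Rsym).
      now rewrite (sjoinC S u 0), sjoin0, sjoinA, sjoinI in E. }
    assert (Hv : r v (u + v)).
    { assert (E : r (v + 0) (v + (u + v))) by (apply Rjoin; auto; now apply Rsym).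
      now rewrite (sjoinC S v 0), sjoin0, (sjoinC S u v), sjoinA, sjoinI, sjoinC in E. }
    split; eauto.
  - intros [Hu Hv].
    assert (E := Rjoin _ _ _ _ Hu Hv).
    now rewrite sjoin0 in E.
Qed.

Lemma zero_class_eta {r} i : is_con S r ->
  zero_class S (eta S r) i <-> zero_class S r i.
Proof.
  intros Hr; split.
  - intros [j [Hj Eij]].
    rewrite sjoin0 in Eij.
    apply (proj1 (zero_class_join i j Hr)).
    unfold zero_class; now rewrite Eij.
  - intros Hi; exists i; split; [exact Hi|].
    now rewrite sjoinI, sjoin0.
Qed.

Lemma eta_monotone r s :
  (forall i, zero_class S r i -> zero_class S s i) -> rle (eta S r) (eta S s).
Proof. intros Hrs x y [i [Hi Exy]]; exists i; auto. Qed.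

Lemma con_meet_is_con r s : is_con S r -> is_con S s -> is_con S (con_meet r s).
Proof.
  intros (R1 & R2 & R3 & R4 & R5) (T1 & T2 & T3 & T4 & T5); unfold con_meet.
  split; [|split; [|split; [|split]]]; firstorder.
Qed.

Lemma tau_is_con r : is_con S r -> is_con S (tau S r).
Proof.
  intros Hr; unfold tau; split; [|split; [|split; [|split]]].
  - tauto.
  - intros x y Hxy h Hh; specialize (Hxy h Hh); tauto.
  - intros x y z Hxy Hyz h Hh; specialize (Hxy h Hh); specialize (Hyz h Hh); tauto.
  - intros x y x' y' Hxy Hxy' h Hh.
    rewrite !(in_monoid_join Hh), !(zero_class_join _ _ Hr).
    specialize (Hxy h Hh); specialize (Hxy' h Hh); tauto.
  - intros f Hf x y Hxy h Hh; exact (Hxy _ (in_monoid_compr Hh Hf)).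
Qed.

Lemma con_join_least r s t : is_con S t -> rle r t -> rle s t ->
  rle (con_join S r s) t.
Proof. intros Ht Hr Hs x y Hxy; exact (Hxy t Ht Hr Hs). Qed.

Definition shift_by_zero_class (zeta beta : rel S) : rel S :=
  fun u v => exists a, zero_class S zeta a /\ beta (u + a) (v + a).

Section ShiftByZeroClass.
Context {zeta beta : rel S}.
Hypothesis zeta_con : is_con S zeta.
Hypothesis beta_con : is_con S beta.

Lemma shift_by_zero_class_is_con : is_con S (shift_by_zero_class zeta beta).
Proof.
  pose proof zeta_con as (Z1 & _ & _ & _ & Z5).
  pose proof beta_con as (B1 & B2 & B3 & B4 & B5).
  assert (Zjoin : forall a b, zero_class S zeta a -> zero_class S zeta b ->
                              zero_class S zeta (a + b))
    by (intros a b Ha Hb; now apply zero_class_join).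
  unfold shift_by_zero_class; split; [|split; [|split; [|split]]].
  - intros u; exists 0; split; [apply Z1 | apply B1].
  - intros u v [a [Ha Huv]]; exists a; auto.
  - intros u v w [a [Ha Huv]] [b [Hb Hvw]]; exists (a + b); split; [auto|].
    apply B3 with (v + (a + b)).
    + assert (E := B4 _ _ _ _ Huv (B1 b)); now rewrite <- !sjoinA in E.
    + assert (E := B4 _ _ _ _ Hvw (B1 a)).
      now rewrite <- !sjoinA, (sjoinC S b a) in E.
  - intros u v u' v' [a [Ha Huv]] [b [Hb Huv']]; exists (a + b); split; [auto|].
    rewrite <- (sjoinACA u a u' b), <- (sjoinACA v a v' b); exact (B4 _ _ _ _ Huv Huv').
  - intros f Hf u v [a [Ha Huv]]; exists (f a); split.
    + unfold zero_class in *; rewrite <- (sops_zero S f Hf); auto.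
    + rewrite <- !(sops_join S f Hf); auto.
Qed.

Lemma eta_le_shift_by_zero_class : rle (eta S zeta) (shift_by_zero_class zeta beta).
Proof.
  intros u v [a [Ha Euv]]; exists a; split; [exact Ha|].
  rewrite Euv; apply (proj1 beta_con).
Qed.

Lemma le_shift_by_zero_class : rle beta (shift_by_zero_class zeta beta).
Proof.
  intros u v Huv; exists 0; split; [apply (proj1 zeta_con)|].
  now rewrite (sjoinC S u), (sjoinC S v), !sjoin0.
Qed.

End ShiftByZeroClass.

Lemma tau_con_meet_above_zero_class {zeta chi a} i : is_con S zeta -> is_con S chi ->
  zero_class S zeta a ->
  tau S (con_meet zeta chi) (i + a) a -> tau S chi (i + a) a.
Proof.
  intros Hzeta Hchi Ha Hmeet h Hh.
  (* h a stays in the 0-class of zeta and lies below h (i + a) *)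
  assert (Hha : zero_class S zeta (h a)).
  { unfold zero_class; rewrite <- (in_monoid_zero Hh).
    exact (con_in_monoid Hzeta Hh _ _ Ha). }
  split.
  - rewrite (in_monoid_join Hh), (zero_class_join _ _ Hchi); tauto.
  - intros Hchi_a; apply (proj2 (Hmeet h Hh)); split; assumption.
Qed.

End SemilatticeWithOperators.

Theorem theorem6p1 (S : SLO) (zeta gamma chi : rel S) :
  is_con S zeta -> is_con S gamma -> is_con S chi ->
  rle (eta S zeta) (eta S gamma) ->
  rle (tau S chi) (tau S gamma) ->
  rle (eta S (con_join S (eta S zeta) (tau S (con_meet zeta chi)))) (eta S gamma).
Proof.
  intros Hzeta Hgamma Hchi Heta Htau.
  apply eta_monotone; intros i Hi.
  assert (Hbeta : is_con S (tau S (con_meet zeta chi)))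
    by (apply tau_is_con, con_meet_is_con; assumption).
  assert (Zsub : forall a, zero_class S zeta a -> zero_class S gamma a).
  { intros a Ha.
    apply (zero_class_eta a Hgamma), Heta, (zero_class_eta a Hzeta), Ha. }
  assert (Hshift : shift_by_zero_class zeta (tau S (con_meet zeta chi)) i (szero S)).
  { revert Hi; apply con_join_least.
    - exact (shift_by_zero_class_is_con Hzeta Hbeta).
    - exact (eta_le_shift_by_zero_class Hbeta).
    - exact (le_shift_by_zero_class Hzeta). }
  destruct Hshift as [a [Ha Hia]]; rewrite sjoin0 in Hia.
  assert (Hgamma_ia := Htau _ _ (tau_con_meet_above_zero_class i Hzeta Hchi Ha Hia) _ (mon_id S)).
  exact (proj1 (proj1 (zero_class_join i a Hgamma) (proj2 Hgamma_ia (Zsub a Ha)))).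
Qed.
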